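(* Let $\Gamma$ be a context and $A$ a type. If for all possible-world models $\mathcal{M}$ it is the case that $\mathcal{M}([\![\Gamma]\!],[\![A]\!])$ is inhabited, then there is a term $t$ of type $A$ in context $\Gamma$ of $\mathrm{IK}_C$.
   Context: Types $A::=\iota\mid A\to B\mid\Box A$; contexts $\Gamma::=\cdot\mid\Gamma,A\mid\Gamma,\mathsf{lock}$ ($\mathsf{lock}$ the context lock). A possible-world model is a frame $(W,R_i,R_m)$ ($R_i$ reflexive transitive; factorization $R_m;R_i\subseteq R_i;R_m$) plus a valuation $V_\iota$ monotone along $R_i$; $\mathcal{M}(X,Y)$ is the type of families $\forall w.\,X_w\to Y_w$. Interpretation: $[\![\iota]\!]_w=V_{\iota,w}$, $[\![A\to B]\!]_w=\forall w'.\,w\mathrel{R_i}w'\to[\![A]\!]_{w'}\to[\![B]\!]_{w'}$, $[\![\Box A]\!]_w=\forall w'.\,w\mathrel{R_i}w'\to\forall v.\,w'\mathrel{R_m}v\to[\![A]\!]_v$, $[\![\cdot]\!]_w=\top$, $[\![\Gamma,A]\!]_w=[\![\Gamma]\!]_w\times[\![A]\!]_w$, $[\![\Gamma,\mathsf{lock}]\!]_w=\sum_u[\![\Gamma]\!]_u\times(u\mathrel{R_m}w)$. $\mathrm{IK}_C$ terms: STLC plus $\mathsf{box}\,t:\Box A$ in $\Gamma$ from $t:A$ in $\Gamma,\mathsf{lock}$, and $\mathsf{unbox}(t,e):A$ in $\Gamma$ from $t:\Box A$ in $\Delta$ with $\Gamma=\Delta,\mathsf{lock},\Delta'$ ($\Delta'$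 lock-free). *)

Inductive Ty : Type :=
| iota : Ty
| arr : Ty -> Ty -> Ty
| box : Ty -> Ty.

Inductive Ctx : Type :=
| cnil : Ctx
| cext : Ctx -> Ty -> Ctx
| clock : Ctx -> Ctx.

(* Variables: de Bruijn indices; a variable cannot be looked up past a lock. *)
Inductive Var : Ctx -> Ty -> Type :=
| vz : forall G A, Var (cext G A) A
| vs : forall G A B, Var G A -> Var (cext G B) A.

(* LFExt G D : G = D, D' with D' lock-free. *)
Inductive LFExt : Ctx -> Ctx -> Type :=
| lfnil : forall G, LFExt G G
| lfext : forall G D A, LFExt G D -> LFExt (cext G A) D.

Inductive Tm : Ctx -> Ty -> Type :=
| var : forall G A, Var G A -> Tm G A
| lam : forall G A B, Tm (cext G A) B -> Tm G (arr A B)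
| app : forall G A B, Tm G (arr A B) -> Tm G A -> Tm G B
| tbox : forall G A, Tm (clock G) A -> Tm G (box A)
| unbox : forall G D A, Tm D (box A) -> LFExt G (clock D) -> Tm G A.

Record Model : Type := {
  W : Type;
  Ri : W -> W -> Type;
  Rm : W -> W -> Type;
  Ri_refl : forall w, Ri w w;
  Ri_trans : forall w v u, Ri w v -> Ri v u -> Ri w u;
  factor : forall w v v', Rm w v -> Ri v v' -> { u : W & (Ri w u * Rm u v')%type };
  Viota : W -> Type;
  Viota_mono : forall w w', Ri w w' -> Viota w -> Viota w'
}.

Fixpoint evalTy (M : Model) (A : Ty) (w : W M) : Type :=
  match A with
  | iota => Viota M w
  | arr A B => forall w', Ri M w w' -> evalTy M A w' -> evalTy M B w'
  | box A => forall w', Ri M w w' -> forall v, Rm M w' v -> evalTy M A v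
  end.

Fixpoint evalCtx (M : Model) (G : Ctx) (w : W M) : Type :=
  match G with
  | cnil => unit
  | cext G A => (evalCtx M G w * evalTy M A w)%type
  | clock G => { u : W M & (evalCtx M G u * Rm M u w)%type }
  end.

(* M(X, Y) : families  forall w, X w -> Y w. *)
Definition Hom (M : Model) (X Y : W M -> Type) : Type := forall w, X w -> Y w.


(* Completeness by normalisation by evaluation.  The contexts themselves form a
   possible-world model: [R_i] is the order-preserving embedding (weakening)
   of contexts, [Gamma R_m Delta] holds when [Delta] extends [Gamma] by a lock
   followed by a lock-free tail, and [iota] is interpreted by the terms of type
   [iota].  The factorisation condition of this frame is the fact that a
   weakening of a lock extension is a lock extension of a weakening.  In this
   model every type [A] admits maps [reflect : Tm Gamma A -> [[A]]_Gamma] and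
   [reify : [[A]]_Gamma -> Tm Gamma A]; reflecting the variables of [Gamma]
   yields an element of [[Gamma]]_Gamma, and reifying the image of that
   environment under the given family produces the required term. *)

Arguments vz {G A}.
Arguments vs {G A} B _.
Arguments lfnil {G}.
Arguments lfext {G D} A _.
Arguments var {G A} _.
Arguments lam {G A B} _.
Arguments app {G A B} _ _.
Arguments tbox {G A} _.
Arguments unbox {G D A} _ _.

Inductive Wk : Ctx -> Ctx -> Type :=
| wk_nil : Wk cnil cnil
| wk_drop : forall G D A, Wk G D -> Wk G (cext D A)
| wk_keep : forall G D A, Wk G D -> Wk (cext G A) (cext D A)
| wk_lock : forall G D, Wk G D -> Wk (clock G) (clock D).

Arguments wk_drop {G D} A _.
Arguments wk_keep {G D} A _.
Arguments wk_lock {G D} _.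

Fixpoint wk_refl (G : Ctx) : Wk G G :=
  match G with
  | cnil => wk_nil
  | cext G A => wk_keep A (wk_refl G)
  | clock G => wk_lock (wk_refl G)
  end.

Definition wk_wkn (G : Ctx) (A : Ty) : Wk G (cext G A) := wk_drop A (wk_refl G).

Definition wk_trans {G D E} (w1 : Wk G D) (w2 : Wk D E) : Wk G E.
Proof.
  revert G w1.
  induction w2 as [| D E A w2 IH | D E A w2 IH | D E w2 IH]; intros G w1.
  - exact w1.
  - exact (wk_drop A (IH _ w1)).
  - inversion w1 as [| ? ? ? w | ? ? ? w |]; subst.
    + exact (wk_drop A (IH _ w)).
    + exact (wk_keep A (IH _ w)).
  - inversion w1 as [| | | ? ? w]; subst.
    exact (wk_lock (IH _ w)).
Defined.

Definition wk_lfext_factor {G G'} (w : Wk G G') {D} (e : LFExt G (clock D)) :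
  { D' : Ctx & (Wk D D' * LFExt G' (clock D'))%type }.
Proof.
  induction w as [| G G' A w IH | G G' A w IH | G G' w _].
  - inversion e.
  - destruct (IH e) as [D' [wD e']].
    exact (existT _ D' (wD, lfext A e')).
  - inversion e as [| ? ? ? e0]; subst.
    destruct (IH e0) as [D' [wD e']].
    exact (existT _ D' (wD, lfext A e')).
  - inversion e; subst.
    exact (existT _ G' (w, lfnil)).
Defined.

Definition ren_var {G D} (w : Wk G D) {A} (x : Var G A) : Var D A.
Proof.
  induction w as [| G D B w IH | G D B w IH | G D w _].
  - exact x.
  - exact (vs B (IH x)).
  - inversion x as [| ? ? ? y]; subst.
    + exact vz.
    + exact (vs B (IH y)).
  - inversion x.
Defined.

Fixpoint ren_tm {G A} (t : Tm G A) : forall {D}, Wk G D -> Tm D A :=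
  match t with
  | var x => fun _ w => var (ren_var w x)
  | lam t => fun _ w => lam (ren_tm t (wk_keep _ w))
  | app t u => fun _ w => app (ren_tm t w) (ren_tm u w)
  | tbox t => fun _ w => tbox (ren_tm t (wk_lock w))
  | unbox t e => fun _ w =>
      let (D', p) := wk_lfext_factor w e in
      let (wD, e') := p in
      unbox (ren_tm t wD) e'
  end.

Definition term_model : Model := {|
  W := Ctx;
  Ri := Wk;
  Rm := fun G D => LFExt D (clock G);
  Ri_refl := wk_refl;
  Ri_trans := @wk_trans;
  factor := fun _ _ _ e w => wk_lfext_factor w e;
  Viota := fun G => Tm G iota;
  Viota_mono := fun _ _ w t => ren_tm t w
|}.

Fixpoint reflect (A : Ty) : forall G, Tm G A -> evalTy term_model A G :=
  match A with
  | iota => fun G t => t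
  | arr A B => fun G t D (w : Wk G D) a =>
      reflect B D (app (ren_tm t w) (reify A D a))
  | box A => fun G t D (w : Wk G D) V (e : LFExt V (clock D)) =>
      reflect A V (unbox (ren_tm t w) e)
  end
with reify (A : Ty) : forall G, evalTy term_model A G -> Tm G A :=
  match A with
  | iota => fun G t => t
  | arr A B => fun G f =>
      lam (reify B _ (f _ (wk_wkn G A) (reflect A _ (var vz))))
  | box A => fun G f =>
      tbox (reify A _ (f G (wk_refl G) (clock G) lfnil))
  end.

Definition evalTy_mono (A : Ty) {D D'} (w : Wk D D') :
  evalTy term_model A D -> evalTy term_model A D' :=
  match A with
  | iota => fun t => ren_tm t w
  | arr A B => fun f E w' => f E (wk_trans w w')
  | box A => fun f E w' => f E (wk_trans w w')
  end.

Fixpoint evalCtx_mono (G : Ctx) {D D'} (w : Wk D D') :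
  evalCtx term_model G D -> evalCtx term_model G D' :=
  match G with
  | cnil => fun _ => tt
  | cext G A => fun '(g, a) => (evalCtx_mono G w g, evalTy_mono A w a)
  | clock G => fun '(existT _ u (g, e)) =>
      let (u', p) := wk_lfext_factor w e in
      let (wu, e') := p in
      existT _ u' (evalCtx_mono G wu g, e')
  end.

Fixpoint id_env (G : Ctx) : evalCtx term_model G G :=
  match G with
  | cnil => tt
  | cext G A => (evalCtx_mono G (wk_wkn G A) (id_env G), reflect A _ (var vz))
  | clock G => existT _ G (id_env G, lfnil)
  end.

Theorem theorem7 (G : Ctx) (A : Ty) :
  (forall M : Model, inhabited (Hom M (evalCtx M G) (evalTy M A))) ->
  inhabited (Tm G A).
Proof.
  intros H.
  destruct (H term_model) as [h].
  exact (inhabits (reify A G (h G (id_env G)))).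
Qed.
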